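(* Let $N\ge 2$ and let $p(z)=\sum_{k=0}^{N-1}\alpha_kz^k$ be a nonconstant complex polynomial. Let $f_n$ ($n=0,\ldots,N-1$) and $f_n'$ ($n=0,\ldots,N-1$) be as defined below, and set $$k:=\max\{n: f_n\neq 0\},\qquad k':=\max\{n: f_n'\neq0\},\qquad m:=-\frac{k}{2}+\sqrt{\frac{f_k'}{f_k}+\frac{k^2}{4}}.$$ Then $k\ge k'$, $m\in\mathbb{N}_0=\{0,1,2,\ldots\}$ (in particular $f_k'/f_k$ is a nonnegative real number), and $$\alpha_j=0 \text{ for } j<m,\qquad \alpha_m\neq0,\quad \alpha_{m+k}\neq 0,\qquad \alpha_j=0\text{ for } j>m+k.$$ In particular, $\deg(p)=m+k$.
   Context: $\omega_m:=e^{2\pi i/m}$. For $n=0,\ldots,N-1$, $f_n:=\frac{1}{2N-1}\sum_{j=0}^{2N-2}|p(\omega_{2N-1}^j)|^2\exp\big(-\frac{2\pi i jn}{2N-1}\big)$. For $n=0,\ldots,N-2$, $f_n':=\frac{1}{2N-3}\sum_{j=0}^{2N-4}|p'(\omega_{2N-3}^j)|^2\exp\big(-\frac{2\pi i jn}{2N-3}\big)$, and $f_{N-1}':=0$. *)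

From HB Require Import structures.
From mathcomp Require Import all_boot all_order all_algebra all_field.
Set Implicit Arguments. Unset Strict Implicit. Unset Printing Implicit Defensive.
Import Order.TTheory GRing.Theory Num.Theory.
Local Open Scope ring_scope.

(* omega_m = e^{2 pi i/m}.  m.-root (-1) is the m-th root of -1 of smallest
   nonnegative argument, i.e. e^{i pi/m}; its square is e^{2 pi i/m}. *)
Definition omega (m : nat) : algC := (m.-root (-1)) ^+ 2.

Definition fcoef (N : nat) (p : {poly algC}) (n : nat) : algC :=
  let M := (2 * N - 1)%N in
  (M%:R)^-1 * \sum_(j < M) `|p.[omega M ^+ j]| ^+ 2 * (omega M ^+ (j * n))^-1.

Definition fcoef' (N : nat) (p : {poly algC}) (n : nat) : algC :=
  let M := (2 * N - 3)%N in
  if (n < N - 1)%N then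
    (M%:R)^-1 * \sum_(j < M) `|(p^`()).[omega M ^+ j]| ^+ 2 * (omega M ^+ (j * n))^-1
  else 0.

Definition kmax (N : nat) (f : nat -> algC) : nat :=
  \max_(n < N | f n != 0) (n : nat).

From HB Require Import structures.
From mathcomp Require Import all_boot all_order all_algebra all_field.
From mathcomp Require Import ring lra zify.
Import Order.TTheory GRing.Theory Num.Theory.
Set Implicit Arguments. Unset Strict Implicit. Unset Printing Implicit Defensive.
Local Open Scope ring_scope.

(* Sampling |p|^2 at the (2N-1)-th roots of unity loses nothing, because
   |p(z)|^2 = sum_n (sum_b p_(b+n) conj(p_b)) z^n on the unit circle has only
   2N-1 frequencies; so f_n is the autocorrelation sum_b p_(b+n) conj(p_b), and
   likewise f'_n for p'.  If the nonzero coefficients of p lie between m and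
   m+k, with p_m and p_(m+k) nonzero, the autocorrelation vanishes beyond lag k
   and equals p_(m+k) conj(p_m) at lag k, while that of p' equals
   m(m+k) p_(m+k) conj(p_m).  Hence f'_k / f_k = m(m+k), and m is the
   nonnegative root of m^2 + k m = f'_k / f_k.  The only delicate point is that
   [omega M] is a primitive M-th root of unity, which amounts to the
   extremal characterisation of [n.-root] in algC. *)

Lemma norm_unity_root (R : numDomainType) (x : R) n :
  (0 < n)%N -> x ^+ n = 1 -> `|x| = 1.
Proof.
move=> n_gt0 xn1; have := pexpr_eq1 n_gt0 (normr_ge0 x).
by rewrite -normrX xn1 normr1 eqxx => /esym/eqP.
Qed.

Lemma real_norm1_sign (R : numDomainType) (x : R) :
  x \is Num.real -> `|x| = 1 -> x = 1 \/ x = -1.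
Proof.
move=> xR x1; have : x ^+ 2 == 1 by rewrite -real_normK // x1 expr1n.
by rewrite sqrf_eq1 => /orP[] /eqP; [left | right].
Qed.

Lemma norm1_Re_geN1 (C : numClosedFieldType) (x : C) : `|x| = 1 -> -1 <= 'Re x.
Proof.
move=> x1; apply: real_lerNnormlW; first exact: Creal_Re.
by rewrite -x1; apply: leif_le (leif_normC_Re_Creal x).
Qed.

Lemma unit_rotate_real (R : realFieldType) (ar ai br bi : R) :
  ar ^+ 2 + ai ^+ 2 = 1 -> br ^+ 2 + bi ^+ 2 = 1 -> 0 < ai -> 0 < bi -> br < ar ->
  0 < bi * ar - br * ai /\ br < br * ar + bi * ai.
Proof.
move=> a1 b1 ai_gt0 bi_gt0 br_lt; have ar_lt1 : ar < 1 by nra.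
have [sum_le0 | sum_gt0] := lerP (ar + br) 0.
- have bai2 : bi ^+ 2 <= ai ^+ 2 by nra.
  have bai : bi <= ai by nra.
  split; nra.
- have abi2 : ai ^+ 2 < bi ^+ 2 by nra.
  have abi : ai < bi by nra.
  split; nra.
Qed.

Lemma norm1_ReIm_algR (x : algC) : `|x| = 1 ->
  in_algR (Creal_Re x) ^+ 2 + in_algR (Creal_Im x) ^+ 2 = 1.
Proof. by move=> x1; apply: val_inj; rewrite /= -normC2_Re_Im x1 expr1n. Qed.

Lemma upper_unit_rotate (a b : algC) : `|a| = 1 -> `|b| = 1 ->
  0 < 'Im a -> 0 < 'Im b -> 'Re b < 'Re a ->
  0 < 'Im (b * a^*) /\ 'Re b < 'Re (b * a^*).
Proof.
move=> a1 b1 Im_a_gt0 Im_b_gt0 Re_ba.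
have [] := unit_rotate_real (norm1_ReIm_algR a1) (norm1_ReIm_algR b1) Im_a_gt0 Im_b_gt0 Re_ba.
(* The order of [algR] is that of [algC] on the underlying values. *)
rewrite -[_ < _ :> algR]/(algRval _ < algRval _) rmorph0 rmorphB !rmorphM /=.
rewrite -[_ < _ :> algR]/(algRval _ < algRval _) rmorphD !rmorphM /=.
rewrite ImM ReM Re_conj Im_conj => h1 h2; split.
- by move: h1; congr (0 < _); ring.
- by move: h2; congr (_ < _); ring.
Qed.

Section UpperHalfPlaneDescent.

Variable K : nat.
Hypothesis K_gt0 : (0 < K)%N.
Variable u : algC.
Hypotheses (uK : u ^+ K = 1) (Im_u_gt0 : 0 < 'Im u).
Hypothesis u_max : forall g : algC, g ^+ K = 1 -> 0 < 'Im g -> 'Re g <= 'Re u.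

Lemma upper_unity_root_expr g : g ^+ K = 1 -> 0 < 'Im g -> exists j, g = u ^+ j.
Proof.
(* Among the [g * u^* ^+ j] in the upper half plane, one of largest real part
   must be [u]: otherwise one more rotation by [u^*] would do better. *)
move=> gK Im_g_gt0.
have u1 := norm_unity_root K_gt0 uK.
have u'K : u^* ^+ K = 1 by rewrite -rmorphXn uK rmorph1.
pose h (j : nat) := g * u^* ^+ j.
have hK j : h j ^+ K = 1 by rewrite exprMn gK mul1r exprAC u'K expr1n.
have T0 : 0 < 'Im (h (Ordinal K_gt0)) by rewrite /h expr0 mulr1.
case: (@arg_maxP _ _ _ _ [pred j : 'I_K | 0 < 'Im (h j)]
  (fun j => in_algR (Creal_Re (h j))) T0) => j Tj j_max.
have /orP[/eqP Re_hj | Re_hj] : ('Re (h j) == 'Re u) || ('Re (h j) < 'Re u).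
  by rewrite -le_eqVlt u_max.
- have hju : h j = u.
    apply: eqC_semipolar Re_hj _; last by rewrite mulr_ge0 ?ltW.
    by rewrite u1 (norm_unity_root K_gt0 (hK j)).
  by exists j.+1; rewrite exprSr -{2}hju /h mulrCA -exprMn -normCK u1 !expr1n mulr1.
- have [Im_hu Re_hu] := upper_unit_rotate u1 (norm_unity_root K_gt0 (hK j)) Im_u_gt0 Tj Re_hj.
  have hu : h j * u^* = h (Ordinal (ltn_pmod j.+1 K_gt0)).
    by rewrite /h /= (expr_mod _ u'K) exprSr mulrA.
  rewrite hu in Im_hu Re_hu.
  by move/(_ _ Im_hu): j_max => /=; rewrite leNgt => /negP/(_ Re_hu).
Qed.

End UpperHalfPlaneDescent.

Lemma C_prim_root_Im_gt0 K : (2 < K)%N ->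
  exists2 y : algC, K.-primitive_root y & 0 < 'Im y.
Proof.
move=> K_gt2; have [y py] := C_prim_root_exists (ltnW (ltnW K_gt2)).
have [Im_lt0 | Im_gt0 | Im_eq0] := real_ltgtP (Creal_Im y) (real0 _).
- exists y^*; last by rewrite Im_conj oppr_gt0.
  by rewrite fmorph_primitive_root.
- by exists y.
- have y1 := norm_unity_root (ltnW (ltnW K_gt2)) (prim_expr_order py).
  have y2 : y ^+ 2 = 1 by case: (real_norm1_sign (introT (Creal_ImP y) Im_eq0) y1) => ->;
    rewrite ?sqrrN expr1n.
  by move: (prim_order_dvd py 2); rewrite y2 eqxx => /dvdn_leq; lia.
Qed.

Lemma prim_root_upper_max K : (2 < K)%N ->
  exists u : algC, [/\ K.-primitive_root u, 0 < 'Im u &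
    forall g, g ^+ K = 1 -> 0 < 'Im g -> 'Re g <= 'Re u].
Proof.
move=> K_gt2; have K_gt1 := ltnW K_gt2; have K_gt0 := ltnW K_gt1.
have [y py Im_y_gt0] := C_prim_root_Im_gt0 K_gt2.
have Im_y1 : 0 < 'Im (y ^+ Ordinal K_gt1) by rewrite expr1.
case: (@arg_maxP _ _ _ _ [pred i : 'I_K | 0 < 'Im (y ^+ i)]
  (fun i => in_algR (Creal_Re (y ^+ i))) Im_y1) => i Im_u_gt0 i_max.
set u := y ^+ i in Im_u_gt0 i_max.
have uK : u ^+ K = 1 by rewrite exprAC (prim_expr_order py) expr1n.
have u_max g : g ^+ K = 1 -> 0 < 'Im g -> 'Re g <= 'Re u.
  by move=> /(prim_rootP py)[j ->] /i_max.
exists u; split=> //.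
have [j yu] := upper_unity_root_expr K_gt0 uK Im_u_gt0 u_max (prim_expr_order py) Im_y_gt0.
have [d pd dK] := prim_order_exists K_gt0 uK.
suff Kd : (K %| d)%N by have /eqP-> : K == d by rewrite eqn_dvd Kd dK.
by rewrite (prim_order_dvd py) yu exprAC (prim_expr_order pd) expr1n.
Qed.

(* [n.-root (-1)] is, among the [n]-th roots of [-1] in the closed upper half
   plane, one of largest real part; so is a primitive [2n]-th root of unity. *)
Lemma prim_root_rootCN1 n : (1 < n)%N -> (n * 2).-primitive_root (n.-root (-1 : algC)).
Proof.
move=> n_gt1; set K := (n * 2)%N; have K_gt2 : (2 < K)%N by rewrite /K; lia.
have K_gt0 := ltnW (ltnW K_gt2).
have [u [pu Im_u_gt0 u_max]] := prim_root_upper_max K_gt2.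
have uK := prim_expr_order pu.
have un : u ^+ n = -1.
  have : (u ^+ n) ^+ 2 == 1 by rewrite -exprM uK.
  rewrite sqrf_eq1 -(prim_order_dvd pu) => /orP[/dvdn_leq | /eqP //]; rewrite /K; lia.
set z := n.-root (-1).
have zn : z ^+ n = -1 by apply: rootCK; lia.
have zK : z ^+ K = 1 by rewrite /K exprM zn sqrrN expr1n.
have u1 := norm_unity_root K_gt0 uK.
have z1 := norm_unity_root K_gt0 zK.
have Im_z_ge0 : 0 <= 'Im z by apply: Im_rootC_ge0.
have Re_zu : 'Re z <= 'Re u.
  have := Im_z_ge0; rewrite le_eqVlt => /orP[/eqP Im_z_eq0 | /(u_max _ zK) //].
  case: (real_norm1_sign (introT (Creal_ImP z) (esym Im_z_eq0)) z1) => z_sign.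
    by move: zn; rewrite z_sign expr1n => /eqP; rewrite gt_eqF // (lt_trans (ltrN10 _) ltr01).
  by rewrite z_sign raddfN /= (Creal_ReP _ (real1 _)) norm1_Re_geN1.
suff -> : z = u by [].
apply: eqC_semipolar; first by rewrite z1 u1.
  by apply: le_anti; rewrite Re_zu rootC_Re_max ?(ltnW n_gt1) ?ltW.
by rewrite mulr_ge0 // ltW.
Qed.

Lemma omega_prim_root M : (0 < M)%N -> M.-primitive_root (omega M).
Proof.
case: M => // -[_ | M _].
  rewrite /omega root1C sqrrN expr1n; apply/andP; split=> //.
  by apply/forallP => i; rewrite ord1 unity_rootE expr1n !eqxx.
have := exp_prim_root (@prim_root_rootCN1 M.+2 isT) 2.
by rewrite gcdnMl mulnK.
Qed.

Section Autocorrelation.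

Variable C : numClosedFieldType.

Definition acorr (L : nat) (q : {poly C}) (n : nat) : C :=
  \sum_(b < L) q`_(b + n) * (q`_b)^*.

Definition coef_supported (q : {poly C}) (m k : nat) : Prop :=
  forall j, (j < m)%N || (m + k < j)%N -> q`_j = 0.

Lemma conjC_unity_root (x : C) n : (0 < n)%N -> x ^+ n = 1 -> x^* = x ^+ n.-1.
Proof.
move=> n_gt0 xn1; have x1 := norm_unity_root n_gt0 xn1.
have x_neq0 : x != 0 by rewrite -normr_eq0 x1 oner_eq0.
by apply: (mulIf x_neq0); rewrite -normCKC x1 expr1n -exprSr prednK.
Qed.

Lemma sum_prim_root_expr (w : C) M e : M.-primitive_root w ->
  \sum_(j < M) (w ^+ j) ^+ e = if (M %| e)%N then M%:R else 0.
Proof.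
move=> pw; under eq_bigr => j _ do rewrite exprAC.
case: ifP => [M_dvd_e | M_ndvd_e].
  have we : w ^+ e = 1 by apply/eqP; rewrite -(prim_order_dvd pw).
  by rewrite we (eq_bigr (fun _ => 1)) ?sumr_const ?card_ord // => j _; rewrite expr1n.
have we1 : w ^+ e != 1 by rewrite -(prim_order_dvd pw) M_ndvd_e.
have weM : (w ^+ e) ^+ M = 1 by rewrite exprAC (prim_expr_order pw) expr1n.
apply/eqP; have := subrX1 (w ^+ e) M.
by rewrite weM subrr => /esym/eqP; rewrite mulf_eq0 subr_eq0 (negbTE we1).
Qed.

Lemma dvdn_add_predM M a c : (a < M)%N -> (c < M)%N ->
  (M %| a + M.-1 * c)%N = (a == c).
Proof.
move=> a_lt c_lt; have M_gt0 : (0 < M)%N by lia.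
have shift : (a + M.-1 * c + c = a + c * M)%N by case: (M) M_gt0 => // M' _ /=; nia.
apply/idP/eqP => [/dvdnP[r Er] | ->].
  have := congr1 (modn^~ M) shift.
  by rewrite Er modnMDl addnC modnMDl !modn_small // => ->.
have -> : (c + M.-1 * c = c * M)%N by case: (M) M_gt0 => // M' _ /=; nia.
exact: dvdn_mull.
Qed.

(* The exponent [a + M.-1 * (b + n)] stands for [a - b - n], read modulo [M]. *)
Lemma sqnorm_hornerE (q : {poly C}) L M (x : C) n : (0 < M)%N -> x ^+ M = 1 ->
  (size q <= L)%N ->
  `|q.[x]| ^+ 2 * (x ^+ n)^-1 =
  \sum_(a < L) \sum_(b < L) q`_a * (q`_b)^* * x ^+ (a + M.-1 * (b + n)).
Proof.
move=> M_gt0 xM q_le; have xc := conjC_unity_root M_gt0 xM.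
have xV : x^-1 = x^* by rewrite invC_norm (norm_unity_root M_gt0 xM) expr1n invr1 mul1r.
rewrite normCK -exprVn xV xc (horner_coef_wide _ q_le) rmorph_sum !mulr_suml.
apply: eq_bigr => a _; rewrite mulr_sumr mulr_suml; apply: eq_bigr => b _.
rewrite rmorphM rmorphXn /= xc exprD exprM exprD.
ring.
Qed.

Lemma idft_sqnorm_acorr (w : C) (q : {poly C}) M L n : M.-primitive_root w ->
  (size q <= L)%N -> (L + L <= M.+1)%N -> (n < L)%N ->
  (M%:R)^-1 * \sum_(j < M) `|q.[w ^+ j]| ^+ 2 * (w ^+ (j * n))^-1 = acorr L q n.
Proof.
move=> pw q_le LM n_lt; have M_gt0 := prim_order_gt0 pw.
have wjM (j : 'I_M) : (w ^+ j) ^+ M = 1 by rewrite exprAC (prim_expr_order pw) expr1n.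
under eq_bigr => j _ do rewrite exprM (sqnorm_hornerE _ M_gt0 (wjM j) q_le).
have L_le_M : (L <= M)%N by lia.
have coef_sum (a b : 'I_L) :
    \sum_(j < M) q`_a * (q`_b)^* * (w ^+ j) ^+ (a + M.-1 * (b + n)) =
    if a == (b + n)%N :> nat then M%:R * (q`_a * (q`_b)^*) else 0.
  rewrite -mulr_sumr sum_prim_root_expr // dvdn_add_predM; first 1 last.
  - exact: leq_trans (ltn_ord a) L_le_M.
  - by move: (ltn_ord b); lia.
  by case: (_ == _); rewrite ?mulr0 // mulrC.
rewrite exchange_big /=; under eq_bigr => a _ do rewrite exchange_big /=.
rewrite exchange_big /= mulr_sumr; apply: eq_bigr => b _.
rewrite (eq_bigr _ (fun a _ => coef_sum a b)) -big_mkcond.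
rewrite (big_ord1_eq _ (fun j => M%:R * (q`_j * (q`_b)^*))).
case: ltnP => [_ | bn_ge] /=.
  by rewrite mulKf ?(prim_root_natf_neq0 pw).
by rewrite mulr0 nth_default ?mul0r // (leq_trans q_le).
Qed.

Lemma acorr_ge_size L (q : {poly C}) n : (size q <= n)%N -> acorr L q n = 0.
Proof.
move=> q_le; apply: big1 => b _.
by rewrite nth_default ?mul0r // (leq_trans q_le) // leq_addl.
Qed.

Lemma acorr_supported_gt L (q : {poly C}) m k n : coef_supported q m k -> (k < n)%N ->
  acorr L q n = 0.
Proof.
move=> supp k_lt; apply: big1 => b _.
have [b_lt | b_ge] := ltnP b m; first by rewrite (supp b) ?b_lt // conjC0 mulr0.
by rewrite (supp (b + n)%N) ?mul0r //; apply/orP; right; lia.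
Qed.

Lemma acorr_supported_top L (q : {poly C}) m k : coef_supported q m k -> (m < L)%N ->
  acorr L q k = q`_(m + k) * (q`_m)^*.
Proof.
move=> supp m_lt; rewrite /acorr (bigD1 (Ordinal m_lt)) //= addnC big1 ?addr0 //.
move=> b; rewrite -val_eqE /= => b_neq_m.
have [b_lt | b_ge] := ltnP b m; first by rewrite (supp b) ?b_lt // conjC0 mulr0.
by rewrite (supp (b + k)%N) ?mul0r //; apply/orP; right; lia.
Qed.

Lemma deriv_coef_supported (q : {poly C}) m k : coef_supported q m k ->
  coef_supported q^`() m.-1 k.
Proof.
move=> supp j j_out; rewrite coef_deriv supp ?mul0rn //.
by case/orP: j_out => j_out; apply/orP; [left | right]; lia.
Qed.

Lemma coef_deriv_supported_top (q : {poly C}) m k : coef_supported q m k ->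
  q^`()`_(m.-1 + k) * (q^`()`_m.-1)^* = (m * (m + k))%:R * (q`_(m + k) * (q`_m)^*).
Proof.
move=> supp; rewrite !coef_deriv; case: m supp => [|m] supp /=.
  by rewrite !add0n mul0n mul0r (supp k.+1) ?ltnSn ?orbT // mul0rn mul0r.
by rewrite rmorphMn addSn natrM; ring.
Qed.

Lemma coef_supported_lowest (p : {poly C}) : p != 0 ->
  exists2 m, p`_m != 0 & (m <= (size p).-1)%N /\ coef_supported p m ((size p).-1 - m).
Proof.
move=> p_neq0; have lead_neq0 : p`_(size p).-1 != 0 by rewrite -lead_coefE lead_coef_eq0.
have [m p_m_neq0 m_min] := ex_minnP (ex_intro (fun j => p`_j != 0) _ lead_neq0).
exists m => //; split=> [|j]; first exact: m_min.
case/orP=> [j_lt | j_gt]; first by apply/eqP; apply: contraTT j_lt; rewrite -leqNgt; apply: m_min.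
rewrite subnKC ?m_min // in j_gt.
by rewrite nth_default // -(prednK (_ : 0 < size p)%N) // size_poly_gt0.
Qed.

End Autocorrelation.

Lemma fcoefE N (p : {poly algC}) n : (size p <= N)%N -> (n < N)%N ->
  fcoef N p n = acorr N p n.
Proof.
move=> p_le n_lt; apply: idft_sqnorm_acorr => //; last lia.
by apply: omega_prim_root; lia.
Qed.

Lemma fcoef'E N (p : {poly algC}) n : (2 <= N)%N -> (size p <= N)%N ->
  fcoef' N p n = acorr (N - 1) p^`() n.
Proof.
move=> N_ge2 p_le; have p'_le : (size p^`() <= N - 1)%N.
  by rewrite (leq_trans (size_poly _ _)) //; lia.
rewrite /fcoef'; case: ltnP => [n_lt | n_ge] /=.
  by apply: idft_sqnorm_acorr => //; [apply: omega_prim_root | ]; lia.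
by rewrite acorr_ge_size // (leq_trans p'_le).
Qed.

Lemma kmax_le N (f : nat -> algC) k :
  (forall n, (k < n)%N -> (n < N)%N -> f n = 0) -> (kmax N f <= k)%N.
Proof.
move=> f_eq0; apply/bigmax_leqP => n; apply: contraTT; rewrite -ltnNge => k_lt.
by rewrite f_eq0 ?eqxx.
Qed.

Lemma kmaxE N (f : nat -> algC) k : (k < N)%N -> f k != 0 ->
  (forall n, (k < n)%N -> (n < N)%N -> f n = 0) -> kmax N f = k.
Proof.
move=> k_lt fk f_eq0; apply/eqP; rewrite eqn_leq kmax_le //=.
exact: (@leq_bigmax_cond _ (fun n : 'I_N => f n != 0) _ (Ordinal k_lt)).
Qed.

Lemma quadratic_root_nat (m k : nat) :
  - (k%:R / 2) + sqrtC ((m * (m + k))%:R + k%:R ^+ 2 / 4) = m%:R :> algC.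
Proof.
have -> : (m * (m + k))%:R + k%:R ^+ 2 / 4 = (m%:R + k%:R / 2 : algC) ^+ 2.
  by rewrite natrM natrD; field; rewrite ?pnatr_eq0.
by rewrite sqrCK ?addr_ge0 ?divr_ge0 ?ler0n //; ring.
Qed.

Theorem lemma3p3 (N : nat) (p : {poly algC}) :
  (2 <= N)%N -> (size p <= N)%N -> (1 < size p)%N ->
  let f := fcoef N p in
  let f' := fcoef' N p in
  let k := kmax N f in
  let k' := kmax N f' in
  let mval : algC := - (k%:R / 2) + sqrtC (f' k / f k + (k%:R) ^+ 2 / 4) in
  (k' <= k)%N /\
  0 <= f' k / f k /\
  exists m : nat,
    mval = m%:R /\
    (forall j : nat, (j < m)%N -> p`_j = 0) /\
    p`_m != 0 /\
    p`_(m + k) != 0 /\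
    (forall j : nat, (m + k < j)%N -> p`_j = 0) /\
    (size p).-1 = (m + k)%N.
Proof.
move=> N_ge2 p_le p_gt1 f f' k k' mval.
have p_neq0 : p != 0 by rewrite -size_poly_gt0 ltnW.
have [m p_m_neq0 [m_le supp]] := coef_supported_lowest p_neq0.
set d := (size p).-1 in m_le supp *.
have d_lt : (d < N)%N by rewrite /d; lia.
have mkd : (m + (d - m))%N = d by rewrite subnKC.
have p_d_neq0 : p`_d != 0 by rewrite -lead_coefE lead_coef_eq0.
have f_top : f (d - m)%N = p`_d * (p`_m)^*.
  by rewrite /f fcoefE ?(acorr_supported_top supp) ?mkd //; lia.
have f'_top : f' (d - m)%N = (m * d)%:R * f (d - m)%N.
  rewrite /f' fcoef'E // (acorr_supported_top (deriv_coef_supported supp)); last lia.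
  by rewrite coef_deriv_supported_top // mkd f_top.
have f_top_neq0 : f (d - m)%N != 0 by rewrite f_top mulf_neq0 ?conjC_eq0.
have k_eq : k = (d - m)%N.
  apply: kmaxE f_top_neq0 _ => [|n k_lt n_lt]; first lia.
  by rewrite /f fcoefE // (acorr_supported_gt _ supp k_lt).
have ratio : f' k / f k = (m * d)%:R by rewrite k_eq f'_top mulfK.
split.
  rewrite k_eq; apply: kmax_le => n k_lt _.
  by rewrite /f' fcoef'E // (acorr_supported_gt _ (deriv_coef_supported supp) k_lt).
split; first by rewrite ratio ler0n.
exists m; rewrite /mval ratio k_eq -[X in (m * X)%N]mkd quadratic_root_nat mkd.
split=> //; split=> [j j_lt | ]; first by apply: supp; rewrite j_lt.
do 2 split=> //; split=> [j j_gt | //].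
by apply: supp; rewrite mkd j_gt orbT.
Qed.
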